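(* Let $\mathcal{G}=(\mathcal{N},\mathcal{E})$ be a finite simple undirected graph with vertex set $\mathcal{N}=\{1,\dots,N\}$. Let $\mathbb{T}^N=(\mathbb{R}/2\pi\mathbb{Z})^N$ and $$\mathbb{T}^N_0(\mathcal{G}):=\{\theta=(\theta_1,\dots,\theta_N)\in\mathbb{T}^N:\ \theta_i\neq\theta_j \text{ for all } \{i,j\}\in\mathcal{E}\},$$ and let $R_0(\mathcal{G})$ denote the number of connected components of $\mathbb{T}^N_0(\mathcal{G})$. Then: (i) if $\mathcal{G}=T$ is a tree on $N\ge 1$ vertices, $R_0(T)=1$; (ii) if $\mathcal{G}=C_N$ is the cycle graph on $N\ge 3$ vertices, $R_0(C_N)=N-1$.
   Context: $\mathbb{T}^N_0(\mathcal{G})$ is the configuration space of $N$ agents on the circle in which agents joined by an edge of $\mathcal{G}$ never coincide (the region left forward-invariant by repulsive couplings with barriers at zero separation). The cycle graph $C_N$ has edges $\{k,k+1\}$ for $k=1,\dots,N-1$ and $\{N,1\}$. *)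

From HB Require Import structures.
From mathcomp Require Import all_boot all_order all_algebra.
From mathcomp Require Import all_classical all_reals all_analysis.
Set Implicit Arguments. Unset Strict Implicit. Unset Printing Implicit Defensive.
Import Order.TTheory GRing.Theory Num.Theory.
Import numFieldNormedType.Exports.
Local Open Scope classical_set_scope.
Local Open Scope ring_scope.

Definition simple_graph (N : nat) (e : rel 'I_N) : Prop :=
  irreflexive e /\ symmetric e.

Definition graph_connected (N : nat) (e : rel 'I_N) : Prop :=
  forall i j : 'I_N, connect e i j.

Definition acyclic (N : nat) (e : rel 'I_N) : Prop :=
  forall c : seq 'I_N, (3 <= size c)%N -> ~ ucycle e c.

Definition is_tree (N : nat) (e : rel 'I_N) : Prop :=
  graph_connected e /\ acyclic e.

(* The cycle graph C_N: edges {k, k+1 mod N} (0-based labelling). *)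
Definition cycle_graph (N : nat) : rel 'I_N :=
  fun i j => (val j == (val i).+1 %% N)%N || (val i == (val j).+1 %% N)%N.

(* The circle R/2piZ, realised (homeomorphically) as the unit circle in R^2. *)
Definition circle (R : realType) : set (R * R)%type :=
  [set p | p.1 ^+ 2 + p.2 ^+ 2 = 1].

(* The configuration space T^N_0(G) inside the torus T^N = (S^1)^N,
   itself a subspace of (R^2)^N with the product topology. *)
Definition config_space (R : realType) (N : nat) (e : rel 'I_N)
  : set {ptws 'I_N -> (R * R)%type} :=
  [set th | (forall i, @circle R (th i)) /\
            (forall i j, e i j -> th i <> th j)].

Definition components (T : topologicalType) (A : set T) : set (set T) :=
  [set connected_component A x | x in A].
Arguments cycle_graph N : clear implicits.
Arguments config_space R {N} e.

From HB Require Import structures.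
From mathcomp Require Import all_boot all_order all_algebra.
From mathcomp Require Import all_classical all_reals all_analysis.
From mathcomp Require Import ring lra zify.
Import Order.TTheory GRing.Theory Num.Theory.
Import numFieldNormedType.Exports.
Local Open Scope classical_set_scope.
Local Open Scope ring_scope.
Set Implicit Arguments. Unset Strict Implicit. Unset Printing Implicit Defensive.

(* Configurations are lifted to real angles [a : 'I_N -> R], [th i = cis (a i)].
   For a tree rooted at [r], the lifts with [0 < a v - a (parent v) < 2 pi] on
   every parent edge cover the whole configuration space and form a convex set,
   so the configuration space is a continuous image of a convex set, hence
   connected.  For the cycle, lifting along the path [0, 1, ..., N-1] leaves an
   increment [a 0 - a (N-1) + 2 pi m] on the closing edge; the number [m] of full
   turns is the winding number and lies in [1, N-1].  Each value of [m] gives a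
   convex set of lifts, hence a connected region, and the winding number is
   continuous and takes values in [2 pi Z], so it is constant on components:
   these N-1 regions are exactly the components. *)

Section UnitCircle.
Variable R : realType.
Implicit Types (a b x y : R) (p q : (R * R)%type).

Definition cis a : (R * R)%type := (cos a, sin a).

(* The argument of [p] in the open interval (0, 2pi), from the half-angle
   formula cot (t / 2) = sin t / (1 - cos t); at [p = (1, 0)] the division by
   zero makes it the junk value [pi]. *)
Definition angle p : R := pi - 2 * atan (p.2 / (1 - p.1)).

(* In complex notation [turn p q] is [conj p * q], the rotation taking [p] to [q]. *)
Definition turn p q : (R * R)%type :=
  (p.1 * q.1 + p.2 * q.2, p.1 * q.2 - p.2 * q.1).

Lemma pi2_gt0 : 0 < pi *+ 2 :> R.
Proof. by rewrite mulrn_wgt0 ?pi_gt0. Qed.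

Lemma circle_cis a : circle (cis a).
Proof. exact: cos2Dsin2. Qed.

Lemma circle1_eq0 x y : x ^+ 2 + y ^+ 2 = 1 -> x = 1 -> y = 0.
Proof.
move=> + x1; rewrite x1 expr1n => /eqP; rewrite -subr_eq0 addrAC subrr add0r.
by rewrite sqrf_eq0 => /eqP.
Qed.

Lemma cis_eq_cos x y : cis x = cis y -> cos (x - y) = 1.
Proof. by case=> cxy sxy; rewrite cosB cxy sxy -!expr2 cos2Dsin2. Qed.

Lemma cisD_2pi_nat a m : cis (a + pi *+ 2 * m%:R) = cis a.
Proof.
by rewrite /cis mulr_natr (periodicn (@cosD2pi R)) (periodicn (@sinD2pi R)).
Qed.

Lemma cisD_2pi_int a (k : int) : cis (a + pi *+ 2 * k%:~R) = cis a.
Proof.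
case: k => m; first exact: cisD_2pi_nat.
rewrite NegzE intrN mulrN -[in RHS](subrK (pi *+ 2 * m.+1%:R) a).
by rewrite cisD_2pi_nat.
Qed.

Lemma angle_gt0 p : 0 < angle p.
Proof. rewrite /angle; have := atan_ltpi2 (p.2 / (1 - p.1)); lra. Qed.

Lemma angle_lt2pi p : angle p < pi *+ 2.
Proof. rewrite /angle mulr2n; have := atan_gtNpi2 (p.2 / (1 - p.1)); lra. Qed.

Lemma angle_cis y : 0 < y < pi *+ 2 -> angle (cis y) = y.
Proof.
move=> /andP[y0 y2pi]; rewrite /angle /=; set h := y / 2.
have yh : y = h *+ 2 by rewrite mulr2n -splitr.
have h0 : 0 < h < pi by apply/andP; split; move: y0 y2pi; rewrite yh mulr2n; lra.
have sh : 0 < sin h by rewrite sin_gt0_pi.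
have -> : sin y / (1 - cos y) = tan (pi / 2 - h).
  have sinBh : sin (pi / 2 - h) = cos h by rewrite -opprB sinN sinBpihalf opprK.
  have cosBh : cos (pi / 2 - h) = sin h by rewrite -opprB cosN cosBpihalf.
  rewrite /tan sinBh cosBh yh.
  rewrite sin_mulr2n cos_mulr2n.
  have -> : cos h ^+ 2 = 1 - sin h ^+ 2 by rewrite -(cos2Dsin2 h) addrK.
  field.
  by rewrite gt_eqF //= lt0r_neq0 //; nra.
rewrite tanK; first by rewrite yh mulr2n; field.
by rewrite in_itv /=; move: h0 => /andP[]; lra.
Qed.

Lemma cis_angle p : circle p -> p.1 != 1 -> cis (angle p) = p.
Proof.
case: p => x y /= cxy x1; rewrite /angle /=.
have x1' : 1 - x != 0 by rewrite subr_eq0 eq_sym.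
set u := y / (1 - x); set t := atan u.
have ct : cos t ^+ 2 = (1 - x) / 2.
  rewrite /t cos_atan exprVn sqr_sqrtr ?addr_ge0 ?sqr_ge0 //.
  have -> : 1 + u ^+ 2 = 2 / (1 - x).
    by rewrite /u expr_div_n -[y ^+ 2](addKr (x ^+ 2)) cxy; field.
  by rewrite invf_div.
have ct0 : cos t != 0.
  by rewrite /t cos_atan invr_eq0 gt_eqF // sqrtr_gt0 ltr_wpDr // sqr_ge0.
have st : sin t = u * cos t.
  by rewrite -[u]atanK -/t /tan divfK.
rewrite /cis mulr_natl cosB sinB cospi sinpi cos_mulr2n sin_mulr2n st.
congr (_, _); first by rewrite ct; field.
by rewrite mulrCA -expr2 ct /u; field.
Qed.

Lemma cis_surj p : circle p -> exists a, cis a = p.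
Proof.
move=> cp; have [p1|p1] := eqVneq p.1 1; last by exists (angle p); exact: cis_angle.
exists 0; rewrite /cis cos0 sin0; case: p cp p1 => x y /= cp x1.
by rewrite x1 (circle1_eq0 cp x1 : y = 0).
Qed.

Lemma cos_neq1 y : 0 < y < pi *+ 2 -> cos y != 1.
Proof.
move=> y02; apply/eqP => cy1.
have sy0 : sin y = 0 := circle1_eq0 (circle_cis y) cy1.
have := angle_cis y02; rewrite /angle /= cy1 sy0 mul0r atan0 mulr0 subr0 => py.
by move: cy1; rewrite -py cospi; lra.
Qed.

Lemma cis_neq a b : 0 < b - a < pi *+ 2 -> cis a <> cis b.
Proof. by move=> /cos_neq1/eqP + /esym/cis_eq_cos. Qed.

Lemma angle_cis_mod a : cos a != 1 ->
  exists k : int, angle (cis a) = a + pi *+ 2 * k%:~R.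
Proof.
move=> ca; set T := pi *+ 2; have T0 : 0 < T := pi2_gt0.
exists (- Num.floor (a / T)); set b := a + _.
have /andP[fl1 fl2] := floor_itv (a / T); rewrite intrD in fl2.
have b0 : 0 <= b by rewrite /b intrN mulrN subr_ge0 mulrC -ler_pdivlMr.
have b2pi : b < T.
  move: fl2; rewrite ltr_pdivrMr // mulrDl mul1r /b intrN mulrN [_ * T]mulrC; lra.
rewrite -(cisD_2pi_int a (- Num.floor (a / T))) -/b angle_cis // b2pi andbT.
rewrite lt_neqAle b0 andbT; apply: contra ca => /eqP b0'.
by rewrite -[cos a]/((cis a).1) -(cisD_2pi_int a (- Num.floor (a / T))) -/b -b0' /= cos0.
Qed.

Lemma turn_cis a b : turn (cis a) (cis b) = cis (b - a).
Proof. by rewrite /turn /cis /= cosB sinB; congr (_, _); ring. Qed.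

Lemma circle_turn p q : circle p -> circle q -> circle (turn p q).
Proof.
case: p q => [p1 p2] [q1 q2]; rewrite /circle /turn /= => cp cq.
by rewrite -[1](mulr1 1) -{1}cp -cq; ring.
Qed.

Lemma turn_neq1 p q : circle p -> circle q -> p <> q -> (turn p q).1 != 1.
Proof.
case: p q => [p1 p2] [q1 q2] cp cq pq; apply/eqP => t1; apply: pq.
have t2 := circle1_eq0 (circle_turn cp cq) t1; move: cp t1 t2.
rewrite /circle /turn /= => cp t1 t2; congr (_, _).
  transitivity (p1 * (p1 * q1 + p2 * q2) - p2 * (p1 * q2 - p2 * q1)).
    by rewrite t1 t2 mulr1 mulr0 subr0.
  by rewrite -[RHS]mulr1 -cp; ring.
transitivity (p2 * (p1 * q1 + p2 * q2) + p1 * (p1 * q2 - p2 * q1)).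
  by rewrite t1 t2 mulr1 mulr0 addr0.
by rewrite -[RHS]mulr1 -cp; ring.
Qed.

Lemma cisD_angle_turn a p q : circle q -> p <> q -> cis a = p ->
  cis (a + angle (turn p q)) = q.
Proof.
move=> cq pq cap; have cp : circle p by rewrite -cap; exact: circle_cis.
have := cis_angle (circle_turn cp cq) (turn_neq1 cp cq pq).
move: (angle _) => d; rewrite -cap; case: q {cq pq} => q1 q2.
rewrite /turn /cis /= => -[cd sd]; rewrite cosD sinD cd sd; congr (_, _).
  by rewrite -[RHS]mulr1 -(cos2Dsin2 a); ring.
by rewrite -[RHS]mulr1 -(cos2Dsin2 a); ring.
Qed.

End UnitCircle.

Lemma continuous_cis (R : realType) : continuous (@cis R).
Proof.
move=> x; apply: (@cvg_pair _ _ _ (nbhs x) (nbhs (cos x)) (nbhs (sin x)) _ _ _ cos sin).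
  exact: continuous_cos.
exact: continuous_sin.
Qed.

Lemma continuous_angle (R : realType) (p : (R * R)%type) :
  p.1 != 1 -> {for p, continuous (@angle R)}.
Proof.
move=> p1; apply: cvgB; first exact: cvg_cst.
apply: cvgM; first exact: cvg_cst.
apply: (@continuous_comp _ _ _ (fun q : (R * R)%type => q.2 / (1 - q.1))
  (@atan R) p _ (@continuous_atan R _)).
apply: cvgM; first exact: cvg_snd.
by apply: cvgV; [rewrite subr_eq0 eq_sym|apply: cvgB; [exact: cvg_cst|exact: cvg_fst]].
Qed.

Lemma continuous_ptws (X : topologicalType) (I : Type) (V : topologicalType)
  (f : X -> {ptws I -> V}) :
  (forall i, continuous (fun x => f x i)) -> continuous f.
Proof.
move=> cf x; apply/cvg_sup => i.
exact: (@continuous_comp_initial _ X V (fun g : {ptws I -> V} => g i) f (cf i)).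
Qed.

Lemma components_connected (T : topologicalType) (A : set T) :
  A !=set0 -> connected A -> components A = [set A].
Proof.
move=> [x Ax] cA; apply/seteqP; split => [_ [y Ay <-]|_ ->].
  by rewrite /= connected_component_id.
by exists x => //; rewrite connected_component_id.
Qed.

(* A connected set cannot jump between two multiples of [c]: its image is an
   interval, which would contain the odd multiple of [c / 2] lying between. *)
Lemma connected_multiple_const (R : realType) (T : topologicalType)
    (C : set T) (f : T -> R) (c : R) :
  0 < c -> connected C -> {within C, continuous f} ->
  (forall x, C x -> exists m : nat, f x = c * m%:R) ->
  forall x y, C x -> C y -> f x = f y.
Proof.
move=> c0 cC fC fmult.
have /connected_intervalP fCitv := connected_continuous_connected cC fC.
suff le_eq x y : C x -> C y -> f x <= f y -> f x = f y.
  by move=> x y Cx Cy; have [/le_eq|/ltW/le_eq/esym] := leP (f x) (f y); apply.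
move=> Cx Cy; have [[m fxm] [k fyk]] := (fmult x Cx, fmult y Cy).
rewrite le_eqVlt => /predU1P[//|fxy]; exfalso.
have mk : (m < k)%N by rewrite -(ltr_nat R) -(ltr_pM2l c0) -fxm -fyk.
have [z Cz fz] : (f @` C) (c * m%:R + c / 2).
  apply: (fCitv (f x) (f y)); [by exists x|by exists y|].
  rewrite fxm fyk; apply/andP; split; first by rewrite lerDl ltW // divr_gt0.
  have : m.+1%:R <= k%:R :> R by rewrite ler_nat.
  rewrite -natr1 => mk'; have := ler_pM2l c0 (m%:R + 1) k%:R; rewrite mk' => /esym.
  by rewrite mulrDr mulr1; lra.
have [l fzl] := fmult z Cz.
have : c * (2 * l)%:R = c * (2 * m).+1%:R.
  by rewrite -natr1 !natrM; move: fz; rewrite fzl; nra.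
by move/(mulfI (lt0r_neq0 c0))/eqP; rewrite eqr_nat => /eqP; lia.
Qed.

Lemma convex_comb_oo (R : realType) (lo hi x x' y y' c s : R) :
  lo < x - x' + c < hi -> lo < y - y' + c < hi -> 0 <= s <= 1 ->
  lo < ((1 - s) * x + s * y) - ((1 - s) * x' + s * y') + c < hi.
Proof.
have -> : ((1 - s) * x + s * y) - ((1 - s) * x' + s * y') + c =
  (1 - s) * (x - x' + c) + s * (y - y' + c) by ring.
move: (x - x' + c) (y - y' + c) => u v /andP[u1 u2] /andP[v1 v2] /andP[s0 s1].
have [->|sn1] := eqVneq s 1; first by rewrite subrr mul0r add0r mul1r v1 v2.
have s1' : 0 < 1 - s by rewrite subr_gt0 lt_neqAle sn1 s1.
apply/andP; split; nra.
Qed.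

Section ConvexLifts.
Variables (R : realType) (I : Type).

Definition cis_conf (a : I -> R) : {ptws I -> (R * R)%type} := fun i => cis (a i).

Definition convex_lifts (U : set (I -> R)) : Prop :=
  forall a b, U a -> U b -> forall s, 0 <= s <= 1 ->
    U (fun i => (1 - s) * a i + s * b i).


Lemma connected_cis_conf_convex (U : set (I -> R)) :
  convex_lifts U -> connected (cis_conf @` U).
Proof.
move=> convU; have [->|/set0P[a0 Ua0]] := eqVneq U set0.
  by rewrite image_set0; exact: connected0.
pose seg (b : I -> R) (s : R) := cis_conf (fun i => (1 - s) * a0 i + s * b i).
have seg0 b : seg b 0 = cis_conf a0.
  by apply/funext => i; rewrite /seg /cis_conf subr0 mul1r mul0r addr0.
have seg1 b : seg b 1 = cis_conf b.
  by apply/funext => i; rewrite /seg /cis_conf subrr mul0r add0r mul1r.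
have in01 : [set` `[0, 1]] (0 : R) /\ [set` `[0, 1]] (1 : R).
  by split; rewrite set_itvcc /= lexx ler01.
have -> : cis_conf @` U = \bigcup_(b in U) (seg b @` `[0, 1]).
  apply/seteqP; split => [_ [b Ub <-]|x [b Ub [s]]].
    by exists b => //; exists 1; [case: in01|rewrite seg1].
  rewrite set_itvcc /= => s01 <-.
  by exists (fun i => (1 - s) * a0 i + s * b i); [exact: convU|].
apply: bigcup_connected => [|b Ub].
  by exists (cis_conf a0) => b Ub; exists 0; [case: in01|rewrite seg0].
apply: connected_continuous_connected; first exact: segment_connected.
apply: continuous_subspaceT; apply: continuous_ptws => i s.
apply: continuous_comp; last exact: continuous_cis.
by apply: cvgD; apply: cvgM; [apply: cvgB|..]; solve [exact: cvg_cst|exact: cvg_id].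
Qed.

End ConvexLifts.

Arguments cis_conf {R I} a.



Lemma continuous_angle_turn (R : realType) (I : eqType)
    (i j : I) (th : {ptws I -> (R * R)%type}) :
  (turn (th i) (th j)).1 != 1 ->
  {for th, continuous (fun th : {ptws I -> (R * R)%type} => angle (turn (th i) (th j)))}.
Proof.
move=> h; pose T := {ptws I -> (R * R)%type}.
apply: (@continuous_comp _ _ _ (fun th : T => turn (th i) (th j)) (@angle R) th _
  (continuous_angle h)).
have c1 k : (fun th : T => (th k).1) @ th --> (th k).1.
  exact: continuous_comp (@proj_continuous I (fun=> (R * R)%type) k th) cvg_fst.
have c2 k : (fun th : T => (th k).2) @ th --> (th k).2.
  exact: continuous_comp (@proj_continuous I (fun=> (R * R)%type) k th) cvg_snd.
apply: (@cvg_pair _ _ _ (nbhs th) (nbhs ((turn (th i) (th j)).1))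
  (nbhs ((turn (th i) (th j)).2))).
  by apply: cvgD; apply: cvgM.
by apply: cvgB; apply: cvgM.
Qed.

Lemma cycle_mkseq (T : eqType) (e : rel T) (f : nat -> T) n :
  (forall k, (k < n)%N -> e (f k) (f k.+1)) -> e (f n) (f 0%N) ->
  cycle e (mkseq f n.+1).
Proof.
move=> ef efn.
have -> : mkseq f n.+1 = f 0%N :: mkseq (fun k => f k.+1) n.
  by rewrite /mkseq /= -[in LHS](addn0 1%N) iotaDl -map_comp.
rewrite /= rcons_path; apply/andP; split.
  apply/(pathP (f 0%N)) => k; rewrite size_mkseq => kn.
  rewrite nth_mkseq //; case: k kn => [|k] kn /=; first exact: ef.
  by rewrite nth_mkseq ?(ltn_trans _ kn) //; apply: ef.
by rewrite -nth_last size_mkseq; case: n ef efn => [|n] //= _; rewrite nth_mkseq.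
Qed.

Section RootedTree.
Variables (N : nat) (e : rel 'I_N) (r : 'I_N).
Hypotheses (e_irr : irreflexive e) (e_sym : symmetric e).
Hypotheses (e_conn : graph_connected e) (e_acyc : acyclic e).

Definition rball n : {set 'I_N} :=
  iter n (fun S => S :|: [set y | [exists x in S, e x y]]%SET) [set r]%SET.

Lemma rball0 v : (v \in rball 0) = (v == r).
Proof. by rewrite /rball /= inE. Qed.

Lemma rballS n v :
  (v \in rball n.+1) = (v \in rball n) || [exists x in rball n, e x v].
Proof. by rewrite /rball iterS -/(rball n) !inE. Qed.

Lemma rball_path n p x :
  x \in rball n -> path e x p -> last x p \in rball (n + size p).
Proof.
elim: p x n => [|y p IHp] x n /=; first by rewrite addn0.
move=> xn /andP[exy pp]; rewrite addnS -addSn; apply: IHp => //.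
by rewrite rballS; apply/orP; right; apply/existsP; exists x; rewrite xn exy.
Qed.

Lemma rball_exists v : exists n, v \in rball n.
Proof.
have /connectP [p pp ->] := e_conn r v; exists (0 + size p)%N.
by apply: rball_path => //; rewrite rball0.
Qed.

Definition depth v := ex_minn (rball_exists v).

Lemma depthP v : v \in rball (depth v).
Proof. by rewrite /depth; case: ex_minnP. Qed.

Lemma depth_min v n : v \in rball n -> (depth v <= n)%N.
Proof. by rewrite /depth; case: ex_minnP => m _ h /h. Qed.

Lemma depth_root : depth r = 0%N.
Proof. by apply/eqP; rewrite -leqn0; apply: depth_min; rewrite rball0. Qed.

Lemma depth_eq0 v : depth v = 0%N -> v = r.
Proof. by move=> d0; have := depthP v; rewrite d0 rball0 => /eqP. Qed.

Lemma depth_edge x y : e x y -> (depth y <= (depth x).+1)%N.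
Proof.
move=> exy; apply: depth_min; rewrite rballS; apply/orP; right.
by apply/existsP; exists x; rewrite depthP.
Qed.

Definition parent v :=
  odflt r [pick x | (v != r) && e x v && (depth x == (depth v).-1)].

Lemma parent_root : parent r = r.
Proof. by rewrite /parent; case: pickP => //= x; rewrite eqxx. Qed.

Lemma parent_spec v : v != r -> e (parent v) v /\ depth v = (depth (parent v)).+1.
Proof.
move=> vr; have [x /andP[exv /eqP dx]] : exists x, e x v && (depth x == (depth v).-1).
  case dv: (depth v) => [|d]; first by move: vr; rewrite (depth_eq0 dv) eqxx.
  have := depthP v; rewrite dv rballS => /orP[vd|/existsP[x /andP[xd exv]]].
    by have := depth_min vd; rewrite dv ltnn.
  exists x; rewrite exv /=; have := depth_min xd; have := depth_edge exv.
  by rewrite dv => h1 h2; apply/eqP; lia.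
rewrite /parent; case: pickP => [y /andP[/andP[_ eyv] /eqP dy]|/(_ x)] /=.
  split => //; rewrite dy prednK // lt0n; apply: contra vr => /eqP/depth_eq0 ->.
  by [].
by rewrite vr exv dx eqxx.
Qed.

Lemma depth_parent v : depth (parent v) = (depth v).-1.
Proof.
have [->|vr] := eqVneq v r; first by rewrite parent_root depth_root.
by have [_ ->] := parent_spec vr.
Qed.

Definition anc v k := iter k parent v.

Lemma depth_anc v k : depth (anc v k) = (depth v - k)%N.
Proof.
elim: k => [|k IHk]; first by rewrite subn0.
by rewrite /anc iterS -/(anc v k) depth_parent IHk subnS.
Qed.

Lemma anc_neq_root v k : (k < depth v)%N -> anc v k != r.
Proof. by move=> kv; apply/eqP => ar; have := depth_anc v k; rewrite ar depth_root; lia. Qed.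

Lemma anc_root v k : (depth v <= k)%N -> anc v k = r.
Proof. by move=> vk; apply: depth_eq0; rewrite depth_anc; lia. Qed.

Lemma anc_inj v k l :
  (k <= depth v)%N -> (l <= depth v)%N -> anc v k = anc v l -> k = l.
Proof. by move=> kv lv /(congr1 depth); rewrite !depth_anc; lia. Qed.

Lemma edge_anc v k : (k < depth v)%N -> e (anc v k) (anc v k.+1).
Proof.
move=> kv; rewrite /anc iterS -/(anc v k) e_sym.
by case: (parent_spec (anc_neq_root kv)).
Qed.

Lemma anc_meet_min u v : exists i j, anc u i = anc v j /\
  forall i' j', anc u i' = anc v j' -> (i + j <= i' + j')%N.
Proof.
pose P s := [exists k : 'I_s.+1, anc u k == anc v (s - k)].
have Pij i j : anc u i = anc v j -> P (i + j)%N.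
  move=> uv; apply/existsP; have ilt : (i < (i + j).+1)%N by lia.
  by exists (Ordinal ilt); rewrite /= addKn uv.
have Pex : exists s, P s by exists (depth u + depth v)%N; apply: Pij; rewrite !anc_root.
have [s /existsP[[i /= ilt] /eqP uv] smin] := ex_minnP Pex.
exists i, (s - i)%N; split => // i' j' /Pij/smin; lia.
Qed.

Section MeetingWalk.
Variables (u v : 'I_N) (i j : nat).
Hypotheses (uv_meet : anc u i = anc v j)
  (ij_min : forall i' j', anc u i' = anc v j' -> (i + j <= i' + j')%N).

Lemma meet_le_depth : (i <= depth u)%N /\ (j <= depth v)%N.
Proof.
split; rewrite leqNgt; apply/negP => lt.
  have uv' : anc u (depth u) = anc v j by rewrite -uv_meet !anc_root // ltnW.
  by have := ij_min uv'; lia.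
have uv' : anc u i = anc v (depth v) by rewrite uv_meet !anc_root // ltnW.
by have := ij_min uv'; lia.
Qed.

Definition meet_walk k := if (k <= i)%N then anc u k else anc v (i + j - k).

Lemma meet_walk_right k : (i <= k)%N -> meet_walk k = anc v (i + j - k).
Proof.
rewrite /meet_walk; case: (leqP k i) => // ki ik.
have -> : k = i by lia.
by rewrite addKn.
Qed.

Lemma uniq_meet_walk : uniq (mkseq meet_walk (i + j).+1).
Proof.
have [iu jv] := meet_le_depth.
apply/mkseq_uniqP => k l; rewrite !inE => kij lij.
have [ki|ik] := leqP k i; have [li|il] := leqP l i.
- by rewrite /meet_walk ki li; apply: anc_inj; lia.
- by rewrite /meet_walk ki leqNgt il /= => /ij_min; lia.
- by rewrite /meet_walk li leqNgt ik /= => /esym/ij_min; lia.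
- rewrite (meet_walk_right (ltnW ik)) (meet_walk_right (ltnW il)) => kl.
  suff : (i + j - k = i + j - l)%N by lia.
  by apply: (anc_inj _ _ kl); lia.
Qed.

Lemma cycle_meet_walk : e u v -> cycle e (mkseq meet_walk (i + j).+1).
Proof.
move=> euv; have [iu jv] := meet_le_depth.
apply: cycle_mkseq; last by rewrite meet_walk_right ?subnn ?leq_addr // /meet_walk leq0n e_sym.
move=> k kij; have [ki|ik] := ltnP k i.
  by rewrite /meet_walk ki ltnW //; apply: edge_anc; lia.
rewrite !meet_walk_right ?(leq_trans ik) //.
have -> : (i + j - k = (i + j - k.+1).+1)%N by lia.
by rewrite e_sym; apply: edge_anc; lia.
Qed.

End MeetingWalk.

(* Otherwise the two root paths from [u] and [v], closed up by the edge, would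
   form a cycle. *)
Lemma edge_parent u v : e u v -> parent u = v \/ parent v = u.
Proof.
move=> euv; have [i [j [uv ij_min]]] := anc_meet_min u v.
have [ij2|] := leqP 2 (i + j).
  exfalso; apply: (e_acyc (c := mkseq (meet_walk u v i j) (i + j).+1)).
    by rewrite size_mkseq.
  by rewrite /ucycle cycle_meet_walk // uniq_meet_walk.
case: i j uv {ij_min} => [|[|i]] [|[|j]] //= uv _.
- by move: euv; rewrite uv e_irr.
- by right.
- by left.
Qed.

Variable R : realType.

Definition tree_lifts : set ('I_N -> R) :=
  [set a | forall v, v != r -> 0 < a v - a (parent v) < pi *+ 2].

Lemma convex_tree_lifts : convex_lifts tree_lifts.
Proof.
move=> a b Ua Ub s s01 v vr.
move: (Ua v vr) (Ub v vr); rewrite -[a v - _]addr0 -[b v - _]addr0 => ha hb.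
by have := convex_comb_oo ha hb s01; rewrite addr0.
Qed.

Lemma cis_conf_tree_lifts_sub : cis_conf @` tree_lifts `<=` config_space R e.
Proof.
move=> _ [a Ua <-]; split => [i|i j eij]; first exact: circle_cis.
have neq w : w != r -> cis (a (parent w)) <> cis (a w) by move/Ua/cis_neq.
have [pij|pji] := edge_parent eij.
  suff /neq : i != r by rewrite pij => /nesym.
  by apply: contraTneq eij => ir; rewrite -pij ir parent_root e_irr.
suff /neq : j != r by rewrite pji.
by apply: contraTneq eij => jr; rewrite -pji jr parent_root e_irr.
Qed.

Lemma config_tree_lift : config_space R e `<=` cis_conf @` tree_lifts.
Proof.
move=> th [th_circ th_neq].
have [t0 t0r] := cis_surj (th_circ r).
pose a v := t0 + \sum_(k < depth v) angle (turn (th (anc v k.+1)) (th (anc v k))).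
have aS v : v != r -> a v = a (parent v) + angle (turn (th (parent v)) (th v)).
  move=> vr; have [_ dv] := parent_spec vr.
  rewrite /a dv big_ord_recl addrCA [RHS]addrC; congr (_ + (_ + _)).
  by apply: eq_bigr => k _; rewrite /anc /= -!iterSr.
exists a => [v vr|]; first by rewrite aS // addrC addKr angle_gt0 angle_lt2pi.
apply/funext => v; move: {2}(depth v) (erefl (depth v)) => d.
elim: d v => [|d IHd] v dv.
  by rewrite (depth_eq0 dv) /cis_conf /a depth_root big_ord0 addr0.
have vr : v != r by apply: contra_eq_neq dv => ->; rewrite depth_root.
have [epv dpv] := parent_spec vr.
rewrite /cis_conf aS //; apply: cisD_angle_turn (th_circ v) (th_neq _ _ epv) _.
by apply: IHd; move: dv; rewrite dpv => -[].
Qed.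

Lemma tree_components :
  components (config_space R e) = [set config_space R e].
Proof.
have config_eq : config_space R e = cis_conf @` tree_lifts.
  by apply/seteqP; split; [exact: config_tree_lift|exact: cis_conf_tree_lifts_sub].
apply: components_connected; last first.
  by rewrite config_eq; apply: connected_cis_conf_convex; exact: convex_tree_lifts.
pose a v : R := pi * (depth v)%:R; exists (cis_conf a); apply: cis_conf_tree_lifts_sub.
exists a => // v vr; rewrite /a; have [_ ->] := parent_spec vr.
rewrite -natr1 mulrDr mulr1 addrAC subrr add0r mulr2n.
by have := pi_gt0 R; lra.
Qed.

End RootedTree.

Section CycleGraph.
Variables (R : realType) (n : nat).
Local Notation N := n.+1.
Local Notation config := (config_space R (cycle_graph N)).

Lemma cycle_graph_succ k : (k < n)%N -> cycle_graph N (inord k) (inord k.+1).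
Proof.
by move=> kn; apply/orP; left; rewrite /= !inordK ?modn_small //; lia.
Qed.

Lemma cycle_graph_last : cycle_graph N (inord n) (inord 0).
Proof. by apply/orP; left; rewrite /= !inordK ?modnn. Qed.

(* [2 pi] times the winding number of a configuration around the cycle. *)
Definition winding (th : {ptws 'I_N -> (R * R)%type}) : R :=
  \sum_(k < n) angle (turn (th (inord k)) (th (inord k.+1))) +
  angle (turn (th (inord n)) (th (inord 0))).

Definition cyc_lifts (m : nat) : set ('I_N -> R) :=
  [set a | (forall k, (k < n)%N -> 0 < a (inord k.+1) - a (inord k) < pi *+ 2) /\
           0 < a (inord 0) - a (inord n) + pi *+ 2 * m%:R < pi *+ 2].

Definition cyc_region m := cis_conf @` cyc_lifts m.

Lemma convex_cyc_lifts m : convex_lifts (cyc_lifts m).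
Proof.
move=> a b [a_incr a_wrap] [b_incr b_wrap] s s01; split; last first.
  exact: convex_comb_oo a_wrap b_wrap s01.
move=> k kn; move: (a_incr k kn) (b_incr k kn).
rewrite -[a _ - _]addr0 -[b _ - _]addr0 => ha hb.
by have := convex_comb_oo ha hb s01; rewrite addr0.
Qed.

Lemma winding_bounds th : 0 < winding th < pi *+ 2 * N%:R.
Proof.
apply/andP; split.
  apply: ltr_wpDl; last exact: angle_gt0.
  by apply: sumr_ge0 => k _; exact: ltW (angle_gt0 _).
rewrite -natr1 mulrDr mulr1; apply: ler_ltD; last exact: angle_lt2pi.
have -> : pi *+ 2 * n%:R = \sum_(k < n) (pi *+ 2 : R).
  by rewrite sumr_const card_ord mulr_natr.
by apply: ler_sum => k _; exact: ltW (angle_lt2pi _).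
Qed.

Lemma winding_cis_conf m a : cyc_lifts m a -> winding (cis_conf a) = pi *+ 2 * m%:R.
Proof.
move=> [a_incr a_wrap]; rewrite /winding /cis_conf.
rewrite (eq_bigr (fun k : 'I_n => a (inord k.+1) - a (inord k))); last first.
  by move=> k _; rewrite turn_cis angle_cis // a_incr.
rewrite -(big_mkord xpredT (fun k => a (inord k.+1) - a (inord k))).
rewrite telescope_sumr // turn_cis -(cisD_2pi_nat _ m) angle_cis //.
by ring.
Qed.

Lemma cyc_region_winding m th : cyc_region m th -> winding th = pi *+ 2 * m%:R.
Proof. by move=> [a ma <-]; exact: winding_cis_conf. Qed.

Lemma cyc_region_index m th : cyc_region m th -> (0 < m <= n)%N.
Proof.
move/cyc_region_winding; have := winding_bounds th => /[swap] ->.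
by rewrite pmulr_rgt0 ?pi2_gt0 // ltr_pM2l ?pi2_gt0 // ltr0n ltr_nat ltnS; exact: id.
Qed.

Lemma cyc_region_winding_inj m m' th ph : cyc_region m th -> cyc_region m' ph ->
  winding th = winding ph -> m = m'.
Proof.
move=> /cyc_region_winding -> /cyc_region_winding ->.
by move/(mulfI (lt0r_neq0 (pi2_gt0 R)))/eqP; rewrite eqr_nat => /eqP.
Qed.

Lemma cyc_lifts_neq m a (i j : 'I_N) :
  cyc_lifts m a -> val j = ((val i).+1 %% N)%N -> cis (a i) <> cis (a j).
Proof.
move=> [a_incr a_wrap] ji; have [ilt|ige] := ltnP i n.
  have -> : j = inord i.+1 by apply: val_inj; rewrite ji /= inordK ?modn_small.
  by rewrite -[i in cis (a i)]inord_val; apply: cis_neq; exact: a_incr.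
have iv : val i = n by apply/eqP; rewrite eqn_leq ige andbT -ltnS ltn_ord.
have -> : i = inord n by apply: val_inj; rewrite /= inordK ?iv.
have -> : j = inord 0 by apply: val_inj; rewrite ji iv modnn /= inordK.
rewrite -(cisD_2pi_nat (a (inord 0)) m); apply: cis_neq.
by rewrite addrAC.
Qed.

Lemma cyc_region_sub m : cyc_region m `<=` config.
Proof.
move=> _ [a ma <-]; split => [i|i j /orP[/eqP ji|/eqP ij]]; first exact: circle_cis.
  exact: cyc_lifts_neq ma ji.
by move=> /esym; exact: cyc_lifts_neq ma ij.
Qed.

Lemma config_cyc_lift th : config th -> exists m, cyc_region m th.
Proof.
move=> [th_circ th_neq]; have [t0 t0th] := cis_surj (th_circ (inord 0)).
pose A k := t0 + \sum_(j < k) angle (turn (th (inord j)) (th (inord j.+1))).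
have AS k : A k.+1 = A k + angle (turn (th (inord k)) (th (inord k.+1))).
  by rewrite /A big_ord_recr addrA.
have cisA k : (k <= n)%N -> cis (A k) = th (inord k).
  elim: k => [|k IHk] kn; first by rewrite /A big_ord0 addr0.
  rewrite AS; apply: cisD_angle_turn (th_circ _) _ (IHk (ltnW kn)).
  exact: th_neq (cycle_graph_succ kn).
have A_le : A 0%N <= A n.
  by rewrite /A big_ord0 addr0 lerDl; apply: sumr_ge0 => j _; exact: ltW (angle_gt0 _).
have wrap_turn : turn (th (inord n)) (th (inord 0)) = cis (A 0%N - A n).
  by rewrite -(cisA n) // -(cisA 0%N) // turn_cis.
have cos_wrap : cos (A 0%N - A n) != 1.
  have := turn_neq1 (th_circ _) (th_circ _) (th_neq _ _ cycle_graph_last).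
  by rewrite wrap_turn.
have [k wrap] := angle_cis_mod cos_wrap; rewrite -wrap_turn in wrap.
have : 0 < A 0%N - A n + pi *+ 2 * k%:~R < pi *+ 2.
  by rewrite -wrap angle_gt0 angle_lt2pi.
case: k {wrap} => m wrap_itv; last first.
  exfalso; move: wrap_itv; rewrite NegzE intrN mulrN => /andP[+ _].
  have : 0 <= pi *+ 2 * m.+1%:R :> R by rewrite mulr_ge0 // ltW // pi2_gt0.
  lra.
exists m, (fun i : 'I_N => A i); last first.
  by apply/funext => i; rewrite /cis_conf cisA ?inord_val // -ltnS.
split=> [j jn|]; last by rewrite !inordK.
have [jN j1N] : (j < N)%N /\ (j.+1 < N)%N by rewrite !ltnS ltnW.
by rewrite /= !inordK // AS addrC addKr angle_gt0 angle_lt2pi.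
Qed.

Lemma continuous_winding th : config th -> {for th, continuous winding}.
Proof.
move=> [th_circ th_neq]; have neq1 i j : cycle_graph N i j -> (turn (th i) (th j)).1 != 1.
  by move=> ij; apply: turn_neq1 (th_circ _) (th_circ _) (th_neq _ _ ij).
have sum_cvg : (\sum_(k < n) angle (turn (x (inord k)) (x (inord k.+1)))) @[x --> th]
    --> \sum_(k < n) angle (turn (th (inord k)) (th (inord k.+1))).
  apply: (@cvg_big _ _ _ _ _ add_continuous _ (nbhs th)) => k _.
  exact/continuous_angle_turn/neq1/cycle_graph_succ.
have -> : winding = (fun x => \sum_(k < n) angle (turn (x (inord k)) (x (inord k.+1))))
    \+ (fun x => angle (turn (x (inord n)) (x (inord 0)))) by [].
exact: continuousD sum_cvg (continuous_angle_turn (neq1 _ _ cycle_graph_last)).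
Qed.

Lemma cyc_component th : config th ->
  exists m, connected_component config th = cyc_region m.
Proof.
move=> th_conf; have [m th_m] := config_cyc_lift th_conf; exists m.
apply/seteqP; split; last first.
  apply: connected_component_max => //; first exact: cyc_region_sub.
  exact/connected_cis_conf_convex/convex_cyc_lifts.
move=> ph ph_comp; have ph_conf := connected_component_sub ph_comp.
have [m' ph_m'] := config_cyc_lift ph_conf.
suff /(cyc_region_winding_inj ph_m' th_m) <- : winding ph = winding th by [].
set C := connected_component config th.
have wind_cont : {within C, continuous winding}.
  apply: continuous_in_subspaceT => x; rewrite inE.
  by move=> /connected_component_sub; exact: continuous_winding.
have wind_mult x : C x -> exists k : nat, winding x = pi *+ 2 * k%:R.
  move=> /connected_component_sub x_conf.
  by have [k /cyc_region_winding] := config_cyc_lift x_conf; exists k.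
exact: (connected_multiple_const (pi2_gt0 R) (@component_connected _ config th) wind_cont
  wind_mult ph_comp (connected_component_refl th_conf)).
Qed.

Lemma cyc_region_nonempty m : (0 < m <= n)%N -> cyc_region m !=set0.
Proof.
move=> /andP[m0 mn]; pose c : R := pi *+ 2 * m%:R / N%:R.
have N0 : 0 < N%:R :> R by rewrite ltr0n.
have pi2 := pi2_gt0 R.
have c0 : 0 < c < pi *+ 2.
  rewrite divr_gt0 ?mulr_gt0 ?ltr0n //= ltr_pdivrMr // ltr_pM2l // ltr_nat; lia.
have Nc : pi *+ 2 * m%:R = N%:R * c by rewrite /c [RHS]mulrC divfK ?gt_eqF.
exists (cis_conf (fun i => (val i)%:R * c)); exists (fun i => (val i)%:R * c) => //.
split=> [k kn|].
  have [kN k1N] : (k < N)%N /\ (k.+1 < N)%N by rewrite !ltnS ltnW.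
  by rewrite /= !inordK // -natr1 mulrDl mul1r addrAC subrr add0r.
rewrite /= !inordK // mul0r Nc -natr1 mulrDl mul1r; move: c0; lra.
Qed.

Lemma cyc_components : components config = (fun k => cyc_region k.+1) @` `I_n.
Proof.
apply/seteqP; split => [_ [th th_conf <-]|_ [k kn <-]].
  have [m comp_m] := cyc_component th_conf.
  have /andP[m0 mn] : (0 < m <= n)%N.
    apply: (@cyc_region_index _ th); rewrite -comp_m.
    exact: connected_component_refl.
  by exists m.-1; rewrite /= ?prednK // comp_m.
have [th th_k] := cyc_region_nonempty (kn : (0 < k.+1 <= n)%N).
have th_conf := cyc_region_sub th_k; exists th => //.
have [m comp_m] := cyc_component th_conf; rewrite comp_m.
have th_m : cyc_region m th by rewrite -comp_m; exact: connected_component_refl.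
by rewrite (cyc_region_winding_inj th_m th_k erefl).
Qed.

Lemma card_cyc_components : (components config #= `I_n)%card.
Proof.
rewrite cyc_components; apply: inj_card_eq => k l kn ln /= eq_kl.
have [th th_k] := cyc_region_nonempty (set_mem kn : (0 < k.+1 <= n)%N).
have th_l : cyc_region l.+1 th by rewrite -eq_kl.
exact: succn_inj (cyc_region_winding_inj th_k th_l erefl).
Qed.

End CycleGraph.

Local Close Scope ring_scope.
Local Open Scope card_scope.

Theorem proposition1 (R : realType) :
  (forall (N : nat) (e : rel 'I_N), (1 <= N)%N -> simple_graph e -> is_tree e ->
     components (config_space R e) #= `I_1) /\
  (forall N : nat, (3 <= N)%N ->
     components (config_space R (cycle_graph N)) #= `I_(N - 1)).
Proof.
split=> [N e N1 [e_irr e_sym] [e_conn e_acyc]|[|n] // _].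
  rewrite (tree_components (Ordinal N1) e_irr e_sym e_conn e_acyc R).
  exact: card_set1.
by rewrite subn1; exact: card_cyc_components.
Qed.
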